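(* Let $B_J=L+U\in\mathbb R^{n\times n}$ with $L$ strictly lower triangular and $U$ strictly upper triangular, and assume all the matrices $L^{(j)}_c$ ($1\le j\le n-1$), $U^{(j)}_c$ ($2\le j\le n$), $L^{(i)}_r$ ($2\le i\le n$), $U^{(i)}_r$ ($1\le i\le n-1$) are nonzero. Consider the splittings $\mathcal B_{FTC}=(L^{(1)}_c,\dots,L^{(n-1)}_c,U^{(n)}_c,\dots,U^{(2)}_c)$ and $\mathcal B_{FTR}=(L^{(2)}_r,\dots,L^{(n)}_r,U^{(n-1)}_r,\dots,U^{(1)}_r)$ of $B_J$ (each of order $2n-2$), and the symmetric Gauss–Seidel matrix $B_{sGS}=(I-U)^{-1}L(I-L)^{-1}U$. Then $T(\mathcal B_{FTC})$, $T(\mathcal B_{FTR})$ and $B_{sGS}$ all have the same nonzero eigenvalues.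
   Context: For $j\in\{1,\dots,n-1\}$, $L^{(j)}_c$ is the $n\times n$ matrix equal to $L$ in column $j$ (rows $i\ge j+1$) and zero elsewhere; for $j\in\{2,\dots,n\}$, $U^{(j)}_c$ equals $U$ in column $j$ (rows $i\le j-1$) and is zero elsewhere; for $i\in\{2,\dots,n\}$, $L^{(i)}_r$ equals $L$ in row $i$ (columns $j\le i-1$) and is zero elsewhere; for $i\in\{1,\dots,n-1\}$, $U^{(i)}_r$ equals $U$ in row $i$ (columns $j\ge i+1$) and is zero elsewhere. For $B\in\mathbb R^{n\times n}$, a splitting of $B$ of order $d\ge1$ is an ordered $d$-tuple $\mathcal B=(B_1,\dots,B_d)$ of real $n\times n$ matrices with $B_p\neq O$ for all $p$, $\sum_{p=1}^d B_p=B$, and $B_p\circ B_q=O$ (Hadamard product) for $p\ne q$. The iteration matrix of $\mathcal B$ is the $dn\times dn$ matrix $T(\mathcal B)=(I_{dn}-\mathcal L)^{-1}\mathcal U$, where $\mathcal L,\mathcal U$ are $d\times d$ block matrices with $n\times n$ blocks, $\mathcal L_{ij}=B_j$ if $i>j$ and $O$ otherwise, $\mathcal U_{ij}=B_j$ if $i\le j$ and $O$ otherwise. *)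

From HB Require Import structures.
From mathcomp Require Import all_boot all_order all_algebra.
From mathcomp Require Import reals complex.
Set Implicit Arguments. Unset Strict Implicit. Unset Printing Implicit Defensive.
Import Order.TTheory GRing.Theory Num.Theory.
Local Open Scope ring_scope.

Section Defs.
Variable R : realType.

(* Indices are 0-based: paper index k corresponds to Rocq index k-1. *)

Definition strictly_lower n (L : 'M[R]_n) := forall i j : 'I_n, (i <= j)%N -> L i j = 0.
Definition strictly_upper n (U : 'M[R]_n) := forall i j : 'I_n, (j <= i)%N -> U i j = 0.

Definition Lcol n (L : 'M[R]_n) (j : nat) : 'M[R]_n :=
  \matrix_(i, k) if (k == j :> nat) && (j < i)%N then L i k else 0.
Definition Ucol n (U : 'M[R]_n) (j : nat) : 'M[R]_n :=
  \matrix_(i, k) if (k == j :> nat) && (i < j)%N then U i k else 0.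
Definition Lrow n (L : 'M[R]_n) (i : nat) : 'M[R]_n :=
  \matrix_(r, k) if (r == i :> nat) && (k < i)%N then L r k else 0.
Definition Urow n (U : 'M[R]_n) (i : nat) : 'M[R]_n :=
  \matrix_(r, k) if (r == i :> nat) && (i < k)%N then U r k else 0.

Definition blockL n d (Bs : 'I_d -> 'M[R]_n) : 'M[R]_(\sum_(p < d) n) :=
  \mxblock_(i < d, j < d) (if (j < i)%N then Bs j else 0).
Definition blockU n d (Bs : 'I_d -> 'M[R]_n) : 'M[R]_(\sum_(p < d) n) :=
  \mxblock_(i < d, j < d) (if (i <= j)%N then Bs j else 0).

Definition iter_mx n d (Bs : 'I_d -> 'M[R]_n) : 'M[R]_(\sum_(p < d) n) :=
  invmx (1%:M - blockL Bs) *m blockU Bs.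

Definition FTC n (L U : 'M[R]_n) (p : 'I_(2 * n - 2)) : 'M[R]_n :=
  if (p < n - 1)%N then Lcol L p else Ucol U (2 * n - 2 - p).
Definition FTR n (L U : 'M[R]_n) (p : 'I_(2 * n - 2)) : 'M[R]_n :=
  if (p < n - 1)%N then Lrow L p.+1 else Urow U (2 * n - 3 - p).

Definition sGS n (L U : 'M[R]_n) : 'M[R]_n :=
  invmx (1%:M - U) *m L *m invmx (1%:M - L) *m U.

Definition nz_eigenvalue m (A : 'M[R]_m) (z : R[i]) : Prop :=
  z != 0 /\ root (map_poly (real_complex R) (char_poly A)) z.

End Defs.

From HB Require Import structures.
From mathcomp Require Import all_boot all_order all_algebra.
From mathcomp Require Import reals complex.
From mathcomp Require Import zify.
Import Order.TTheory GRing.Theory Num.Theory.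
Local Open Scope ring_scope.
Set Implicit Arguments. Unset Strict Implicit. Unset Printing Implicit Defensive.

(* Both splittings consist of a lower part B_1, ..., B_m summing to L and an
   upper part B_(m+1), ..., B_d summing to U, with B_j B_l = 0 whenever j <= l
   lie in the same part.  For z != 0, an eigenvector of T(B) for z is a block
   vector (x_i) with z x_i = sum_(l >= i) B_l x_l + z sum_(l < i) B_l x_l.
   Multiplying this equation by B_i, the vanishing products show that B_i x_i
   only depends on the part containing i, so the block vector collapses to a
   pair (w, y) with z w = U y + z L w and y = L w + U y; such pairs are exactly
   the eigenvectors y of B_sGS for z, and every pair expands back into a block
   eigenvector. *)

Lemma char_poly_trmx (F : fieldType) n (A : 'M[F]_n) : char_poly A^T = char_poly A.
Proof.
by rewrite /char_poly -[RHS]det_tr; congr (\det _); apply/matrixP => i j; rewrite !mxE eq_sym.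
Qed.

Lemma root_char_polyP (F : fieldType) n (A : 'M[F]_n) z :
  reflect (exists2 c : 'cV_n, c != 0 & A *m c = z *: c) (root (char_poly A) z).
Proof.
rewrite -char_poly_trmx -eigenvalue_root_char.
apply: (iffP eigenvalueP) => -[v].
  by move=> vA v0; exists v^T; rewrite ?trmx_eq0 // -[A]trmxK -trmx_mul vA linearZ.
by move=> v0 Av; exists v^T; rewrite ?trmx_eq0 // -trmx_mul Av linearZ.
Qed.

Lemma mxcolZ (R : pzRingType) d (p_ : 'I_d -> nat) m a (C_ : forall i, 'M[R]_(p_ i, m)) :
  \mxcol_i (a *: C_ i) = a *: \mxcol_i C_ i.
Proof. by apply/matrixP => i j; rewrite !mxE. Qed.

Lemma unitmx_of_ker (F : fieldType) n (A : 'M[F]_n) :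
  (forall c : 'cV_n, A *m c = 0 -> c = 0) -> A \in unitmx.
Proof.
move=> ker0; rewrite -unitmx_tr unitmxE unitfE; apply/det0P => -[v v0 vA].
by move: v0; rewrite -trmx_eq0 (ker0 v^T) ?eqxx // -(trmxK A) -trmx_mul vA trmx0.
Qed.

Section BlockIteration.
Variables (F : fieldType) (n d : nat).
Implicit Types (z : F) (b x : 'I_d -> 'cV[F]_n).

Definition sweep z (i : nat) b : 'cV[F]_n :=
  \sum_(l < d) (if (i <= l)%N then b l else z *: b l).

Lemma sweep_split z i b :
  sweep z i b = \sum_(l < d | (i <= l)%N) b l + z *: \sum_(l < d | (l < i)%N) b l.
Proof.
rewrite /sweep (bigID (fun l : 'I_d => (i <= l)%N)) /= scaler_sumr; congr (_ + _).
  by apply: eq_bigr => l ->.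
by apply: eq_big => [l|l /negbTE->]; rewrite // ltnNge.
Qed.

Lemma sweep0 z b : sweep z 0 b = \sum_(l < d) b l.
Proof. by []. Qed.

Lemma eq_sweep z i b b' : (forall l, b l = b' l) -> sweep z i b = sweep z i b'.
Proof. by move=> eq_b; apply: eq_bigr => l _; rewrite eq_b. Qed.

Lemma mulmx_sweep z i (A : 'M[F]_n) b :
  A *m sweep z i b = sweep z i (fun l => A *m b l).
Proof. by rewrite mulmx_sumr; apply: eq_bigr => l _; case: ifP; rewrite ?scalemxAr. Qed.

Variable Bs : 'I_d -> 'M[F]_n.

Definition lower_blocks : 'M[F]_(\sum_(p < d) n) :=
  \mxblock_(i < d, j < d) (if (j < i)%N then Bs j else 0).
Definition upper_blocks : 'M[F]_(\sum_(p < d) n) :=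
  \mxblock_(i < d, j < d) (if (i <= j)%N then Bs j else 0).

Definition block_eqn z x := forall i : 'I_d, z *: x i = sweep z i (fun l => Bs l *m x l).

Lemma mxcol_sweep z x :
  \mxcol_i sweep z i (fun l => Bs l *m x l) =
  upper_blocks *m \mxcol_j x j + z *: (lower_blocks *m \mxcol_j x j).
Proof.
rewrite !mul_mxblock_mxrow -mxcolZ -mxcolD; apply: eq_mxcol => i.
rewrite /sweep scaler_sumr -big_split; apply: eq_bigr => l _ /=.
by case: leqP => _; rewrite mul0mx ?scaler0 ?addr0 ?add0r.
Qed.

Lemma unitmx_1_lower_blocks : 1%:M - lower_blocks \in unitmx.
Proof.
apply: unitmx_of_ker => c; rewrite mulmxBl mul1mx => /eqP; rewrite subr_eq0 => /eqP.
rewrite -(submxcolK c) mul_mxblock_mxrow => /eq_mxcolP fix_c.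
suff c0 k (i : 'I_d) : (i < k)%N -> submxcol c i = 0.
  by rewrite -mxcol0; apply: eq_mxcol => i; apply: (c0 d).
elim: k i => [|k IHk] i //; rewrite ltnS => ik.
rewrite fix_c big1 // => j _; case: ltnP => ji; last exact: mul0mx.
by rewrite IHk ?mulmx0 // (leq_trans ji).
Qed.

Lemma iter_eigenvectorP z : z != 0 ->
  (exists2 c : 'cV_(\sum_(p < d) n),
     c != 0 & invmx (1%:M - lower_blocks) *m upper_blocks *m c = z *: c) <->
  (exists2 x : 'I_d -> 'cV_n, (exists i, x i != 0) & block_eqn z x).
Proof.
move=> z0; have unitL := unitmx_1_lower_blocks.
have eig_mxcol x : invmx (1%:M - lower_blocks) *m upper_blocks *m \mxcol_j x j =
                   z *: \mxcol_j x j <-> block_eqn z x.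
  rewrite -mulmxA; split => [/(canRL (mulKVmx unitL)) | eq_x].
    rewrite mulmxBl mul1mx -scalemxAr => /eqP; rewrite eq_sym subr_eq.
    by rewrite -mxcol_sweep -mxcolZ => /eqP/eq_mxcolP.
  apply: (canLR (mulKmx unitL)); rewrite mulmxBl mul1mx -scalemxAr.
  apply/eqP; rewrite eq_sym subr_eq -mxcol_sweep -mxcolZ.
  by apply/eqP/eq_mxcolP.
split=> [[c c0] | [x [i xi0] eq_x]].
  rewrite -(submxcolK c) eig_mxcol => eq_c; exists (submxcol c) => //.
  apply/existsP; apply: contraNT c0 => /existsPn c0.
  by rewrite -(submxcolK c) -mxcol0; apply/eqP/eq_mxcol => i; apply/eqP/negbNE.
exists (\mxcol_j x j); last exact/eig_mxcol.
by apply: contraNneq xi0 => x0; rewrite -(mxcolK x i) x0 submxcol0.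
Qed.

End BlockIteration.

Section SymmetricGaussSeidel.
Variables (F : fieldType) (n : nat) (L U : 'M[F]_n) (z : F).
Hypotheses (unitL : 1%:M - L \in unitmx) (unitU : 1%:M - U \in unitmx) (z0 : z != 0).

Definition sym_gauss_seidel : 'M[F]_n := invmx (1%:M - U) *m L *m invmx (1%:M - L) *m U.

Definition sgs_system (w y : 'cV[F]_n) :=
  z *: w = U *m y + z *: (L *m w) /\ y = L *m w + U *m y.

Lemma sgs_systemP y : (exists w, sgs_system w y) <-> sym_gauss_seidel *m y = z *: y.
Proof.
have step_L w : (z *: w = U *m y + z *: (L *m w)) <-> (invmx (1%:M - L) *m U *m y = z *: w).
  rewrite -mulmxA; split => [eq_w | /(canRL (mulKVmx unitL))->].
    by apply: (canLR (mulKmx unitL)); rewrite mulmxBl mul1mx -scalemxAr eq_w addrK.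
  by rewrite mulmxBl mul1mx -scalemxAr subrK.
have step_U w : (y = L *m w + U *m y) <-> (invmx (1%:M - U) *m L *m w = y).
  rewrite -mulmxA; split => [eq_y | /(canRL (mulKVmx unitU))->].
    by apply: (canLR (mulKmx unitU)); rewrite mulmxBl mul1mx {1}eq_y addrK.
  by rewrite mulmxBl mul1mx subrK.
have sgsE : sym_gauss_seidel *m y = invmx (1%:M - U) *m L *m (invmx (1%:M - L) *m U *m y).
  by rewrite /sym_gauss_seidel !mulmxA.
split => [[w [/step_L eq_w /step_U eq_y]] | eq_y].
  by rewrite sgsE eq_w -scalemxAr eq_y.
exists (z^-1 *: (invmx (1%:M - L) *m U *m y)); split.
  by apply/step_L; rewrite scalerKV.
apply/step_U; apply: (scalerI z0).
by rewrite scalemxAr scalerKV // -eq_y sgsE.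
Qed.

Lemma sgs_system_0 w : sgs_system w 0 -> w = 0.
Proof.
move=> [+ _]; rewrite mulmx0 add0r => /(scalerI z0)/eqP.
rewrite -subr_eq0 -{1}[w]mul1mx -mulmxBl => /eqP ker_w.
by rewrite -(mulKmx unitL w) ker_w mulmx0.
Qed.

End SymmetricGaussSeidel.

Section SplittingEigenvectors.
Variables (F : fieldType) (n d m : nat) (Bs : 'I_d -> 'M[F]_n) (L U : 'M[F]_n) (z : F).
Hypotheses
  (mulB_lower : forall j l : 'I_d, (j <= l)%N -> (l < m)%N -> Bs j *m Bs l = 0)
  (mulB_upper : forall j l : 'I_d, (m <= j)%N -> (j <= l)%N -> Bs j *m Bs l = 0)
  (sumB_lower : \sum_(l < d | (l < m)%N) Bs l = L)
  (sumB_upper : \sum_(l < d | (m <= l)%N) Bs l = U)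
  (unitL : 1%:M - L \in unitmx) (unitU : 1%:M - U \in unitmx) (z0 : z != 0).

Local Notation Bmul u := (fun l => Bs l *m u l).

Lemma mul_block_sweep j (u : 'I_d -> 'cV[F]_n) :
  Bs j *m sweep z j (Bmul u) =
  Bs j *m (if (j < m)%N then sweep z m (Bmul u) else z *: sweep z 0 (Bmul u)).
Proof.
case: ltnP => jm; rewrite -?scalemxAr !mulmx_sweep /sweep ?scaler_sumr.
  apply: eq_bigr => l _; rewrite !mulmxA.
  case: (leqP j l) => jl; case: (leqP m l) => ml //; last by lia.
  by rewrite (mulB_lower jl ml) mul0mx scaler0.
apply: eq_bigr => l _; rewrite !mulmxA /=.
by case: leqP => // jl; rewrite (mulB_upper jm jl) mul0mx scaler0.
Qed.

Definition pair_blocks (w y : 'cV[F]_n) (l : 'I_d) := if (l < m)%N then w else y.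

Lemma sum_lower_pair_blocks w y :
  \sum_(l < d | (l < m)%N) Bs l *m pair_blocks w y l = L *m w.
Proof. by rewrite -sumB_lower mulmx_suml; apply: eq_bigr => l lm; rewrite /pair_blocks lm. Qed.

Lemma sum_upper_pair_blocks w y :
  \sum_(l < d | (m <= l)%N) Bs l *m pair_blocks w y l = U *m y.
Proof.
by rewrite -sumB_upper mulmx_suml; apply: eq_bigr => l ml; rewrite /pair_blocks ltnNge ml.
Qed.

Lemma sweep_pair_blocks w y :
  sweep z m (Bmul (pair_blocks w y)) = U *m y + z *: (L *m w).
Proof. by rewrite sweep_split sum_lower_pair_blocks sum_upper_pair_blocks. Qed.

Lemma sweep0_pair_blocks w y :
  sweep z 0 (Bmul (pair_blocks w y)) = L *m w + U *m y.
Proof.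
rewrite sweep0 (bigID (fun l : 'I_d => (l < m)%N)) /= sum_lower_pair_blocks.
by rewrite -(sum_upper_pair_blocks w); congr (_ + _); apply: eq_bigl => l; rewrite -leqNgt.
Qed.

Lemma block_eqn_sgs_system x : block_eqn Bs z x -> (exists i, x i != 0) ->
  exists2 y, y != 0 & exists w, sgs_system L U z w y.
Proof.
move=> eq_x [i xi0].
pose y := sweep z 0 (Bmul x); pose w := z^-1 *: sweep z m (Bmul x).
have agree l : Bs l *m x l = Bs l *m pair_blocks w y l.
  apply: (scalerI z0); rewrite scalemxAr eq_x mul_block_sweep /pair_blocks.
  by case: ifP => _; rewrite scalemxAr ?scalerKV.
have sys : sgs_system L U z w y.
  by split; rewrite -?sweep_pair_blocks -?sweep0_pair_blocks -(eq_sweep _ _ agree) ?scalerKV.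
exists y; last by exists w.
apply/eqP => y0; move/eqP: xi0; apply; apply: (scalerI z0).
have w0 : w = 0 by move: sys; rewrite y0; apply: sgs_system_0.
rewrite eq_x scaler0 /sweep big1 // => l _.
by rewrite agree /pair_blocks w0 y0 if_same mulmx0 scaler0 if_same.
Qed.

Lemma sgs_system_block_eqn w y : sgs_system L U z w y -> y != 0 ->
  exists2 x, (exists i, x i != 0) & block_eqn Bs z x.
Proof.
move=> [sys_w sys_y] y0; pose v := pair_blocks w y.
pose x i := z^-1 *: sweep z i (Bmul v).
have agree l : Bs l *m x l = Bs l *m v l.
  apply: (scalerI z0); rewrite !scalemxAr scalerKV // mul_block_sweep.
  rewrite sweep_pair_blocks sweep0_pair_blocks -sys_w -sys_y /v /pair_blocks.
  by case: ifP.
exists x; last by move=> i; rewrite scalerKV // (eq_sweep _ _ agree).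
apply/existsP; apply: contraNT y0 => /existsPn x0.
rewrite sys_y -sweep0_pair_blocks -(eq_sweep _ _ agree) /sweep big1 // => l _.
by move/negbNE/eqP: (x0 l) => ->; rewrite mulmx0.
Qed.

Lemma splitting_eigenvectorP :
  (exists2 c : 'cV_(\sum_(p < d) n),
     c != 0 & invmx (1%:M - lower_blocks Bs) *m upper_blocks Bs *m c = z *: c) <->
  (exists2 y : 'cV_n, y != 0 & sym_gauss_seidel L U *m y = z *: y).
Proof.
rewrite iter_eigenvectorP //; split => [[x nz_x eq_x] | [y y0 /sgs_systemP [] // w sys]].
  have [y y0 [w sys]] := block_eqn_sgs_system eq_x nz_x.
  by exists y => //; apply/sgs_systemP => //; exists w.
exact: sgs_system_block_eqn sys y0.
Qed.

End SplittingEigenvectors.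

Section RealSplittings.
Variable R : realType.
Local Notation toC := (map_mx (real_complex R)).

Lemma unitmx_1_strictly_lower n (L : 'M[R]_n) : strictly_lower L -> 1%:M - L \in unitmx.
Proof.
move=> L_lower; rewrite unitmxE det_trig.
  by rewrite big1 ?unitr1 // => i _; rewrite !mxE eqxx L_lower // subr0.
apply/is_trig_mxP => i j ij; rewrite !mxE L_lower 1?ltnW // subr0.
by case: eqP ij => // ->; rewrite ltnn.
Qed.

Lemma unitmx_1_strictly_upper n (U : 'M[R]_n) : strictly_upper U -> 1%:M - U \in unitmx.
Proof.
move=> U_upper; rewrite -unitmx_tr linearB /= tr_scalar_mx.
by apply: unitmx_1_strictly_lower => i j ij; rewrite mxE U_upper.
Qed.

Lemma nz_eigenvalueP m (A : 'M[R]_m) z :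
  nz_eigenvalue A z <-> z != 0 /\ exists2 c : 'cV_m, c != 0 & toC A *m c = z *: c.
Proof. by rewrite /nz_eigenvalue map_char_poly; split=> -[z0 /root_char_polyP]. Qed.

Lemma map_iter_mx n d (Bs : 'I_d -> 'M[R]_n) :
  toC (iter_mx Bs) =
  invmx (1%:M - lower_blocks (fun p => toC (Bs p))) *m upper_blocks (fun p => toC (Bs p)).
Proof.
have mapB0 (b : bool) p : toC (if b then Bs p else 0) = if b then toC (Bs p) else 0.
  by case: b; rewrite ?map_mx0.
rewrite /iter_mx map_mxM map_invmx map_mxB map_mx1; congr (invmx (_ - _) *m _);
  by apply/matrixP => i j; rewrite !mxE -mapB0 mxE.
Qed.

Lemma map_sGS n (L U : 'M[R]_n) : toC (sGS L U) = sym_gauss_seidel (toC L) (toC U).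
Proof. by rewrite /sGS /sym_gauss_seidel !map_mxM !map_invmx !map_mxB !map_mx1. Qed.

Lemma splitting_nz_eigenvalue n d m (Bs : 'I_d -> 'M[R]_n) (L U : 'M[R]_n) z :
  strictly_lower L -> strictly_upper U ->
  (forall j l : 'I_d, (j <= l)%N -> (l < m)%N -> Bs j *m Bs l = 0) ->
  (forall j l : 'I_d, (m <= j)%N -> (j <= l)%N -> Bs j *m Bs l = 0) ->
  \sum_(l < d | (l < m)%N) Bs l = L -> \sum_(l < d | (m <= l)%N) Bs l = U ->
  nz_eigenvalue (iter_mx Bs) z <-> nz_eigenvalue (sGS L U) z.
Proof.
move=> L_lower U_upper mulB_lower mulB_upper sumB_lower sumB_upper.
have toC_mul0 j l : Bs j *m Bs l = 0 -> toC (Bs j) *m toC (Bs l) = 0.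
  by rewrite -map_mxM => ->; rewrite map_mx0.
have toC_sum (P : pred 'I_d) A : \sum_(l < d | P l) Bs l = A ->
    \sum_(l < d | P l) toC (Bs l) = toC A.
  by move=> <-; rewrite raddf_sum.
have toC_unit (A : 'M[R]_n) : 1%:M - A \in unitmx -> 1%:M - toC A \in unitmx.
  by rewrite -(map_mx1 (real_complex R)) -map_mxB map_unitmx.
have eigP (z0 : z != 0) := splitting_eigenvectorP
  (fun j l jl lm => toC_mul0 j l (mulB_lower j l jl lm))
  (fun j l mj jl => toC_mul0 j l (mulB_upper j l mj jl))
  (toC_sum _ _ sumB_lower) (toC_sum _ _ sumB_upper)
  (toC_unit _ (unitmx_1_strictly_lower L_lower))
  (toC_unit _ (unitmx_1_strictly_upper U_upper)) z0.
rewrite !nz_eigenvalueP map_iter_mx map_sGS.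
by split=> -[z0 eig]; split => //; apply/(eigP z0).
Qed.

End RealSplittings.

Lemma sum_pieces_mx (V : nmodType) p q d (P : pred 'I_d) (S : 'I_d -> 'I_p -> 'I_q -> bool)
    (M : 'M[V]_(p, q)) (piece : 'I_d -> 'M[V]_(p, q)) :
  (forall l i k, P l -> piece l i k = if S l i k then M i k else 0) ->
  (forall i k, M i k != 0 ->
     exists2 l0, P l0 && S l0 i k & forall l, P l -> S l i k -> l = l0) ->
  \sum_(l < d | P l) piece l = M.
Proof.
move=> pieceE cover; apply/matrixP => i k.
rewrite summxE (eq_bigr _ (fun l Pl => pieceE l i k Pl)).
have [-> | /cover[l0 /andP[Pl0 Sl0] l0_uniq]] := eqVneq (M i k) 0.
  by rewrite big1 // => l _; rewrite if_same.
rewrite (bigD1 l0) //= Sl0 big1 ?addr0 // => l /andP[Pl ll0].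
by case: ifP => // /(l0_uniq l Pl) l_l0; rewrite l_l0 eqxx in ll0.
Qed.

Section FrontTriangularSplittings.
Variables (R : realType) (n : nat) (L U : 'M[R]_n).
Hypotheses (L_lower : strictly_lower L) (U_upper : strictly_upper U).

Lemma Lcol_mul0 j l : (j <= l)%N -> Lcol L j *m Lcol L l = 0.
Proof.
move=> jl; apply/matrixP => i k; rewrite !mxE big1 // => s _; rewrite !mxE.
by do 2 case: ifP => [/andP[/eqP ? ?]|_]; rewrite ?mul0r ?mulr0 //; lia.
Qed.

Lemma Ucol_mul0 j l : (l <= j)%N -> Ucol U j *m Ucol U l = 0.
Proof.
move=> lj; apply/matrixP => i k; rewrite !mxE big1 // => s _; rewrite !mxE.
by do 2 case: ifP => [/andP[/eqP ? ?]|_]; rewrite ?mul0r ?mulr0 //; lia.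
Qed.

Lemma Lrow_mul0 i k : (i <= k)%N -> Lrow L i *m Lrow L k = 0.
Proof.
move=> ik; apply/matrixP => a b; rewrite !mxE big1 // => s _; rewrite !mxE.
by do 2 case: ifP => [/andP[/eqP ? ?]|_]; rewrite ?mul0r ?mulr0 //; lia.
Qed.

Lemma Urow_mul0 i k : (k <= i)%N -> Urow U i *m Urow U k = 0.
Proof.
move=> ki; apply/matrixP => a b; rewrite !mxE big1 // => s _; rewrite !mxE.
by do 2 case: ifP => [/andP[/eqP ? ?]|_]; rewrite ?mul0r ?mulr0 //; lia.
Qed.

Local Notation d := (2 * n - 2)%N.

Lemma FTC_mul_lower (j l : 'I_d) : (j <= l)%N -> (l < n - 1)%N -> FTC L U j *m FTC L U l = 0.
Proof. by move=> jl lm; rewrite /FTC (leq_ltn_trans jl lm) lm Lcol_mul0. Qed.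

Lemma FTC_mul_upper (j l : 'I_d) : (n - 1 <= j)%N -> (j <= l)%N -> FTC L U j *m FTC L U l = 0.
Proof.
by move=> mj jl; rewrite /FTC ltnNge mj ltnNge (leq_trans mj jl) Ucol_mul0 //; lia.
Qed.

Lemma FTR_mul_lower (j l : 'I_d) : (j <= l)%N -> (l < n - 1)%N -> FTR L U j *m FTR L U l = 0.
Proof. by move=> jl lm; rewrite /FTR (leq_ltn_trans jl lm) lm Lrow_mul0. Qed.

Lemma FTR_mul_upper (j l : 'I_d) : (n - 1 <= j)%N -> (j <= l)%N -> FTR L U j *m FTR L U l = 0.
Proof.
by move=> mj jl; rewrite /FTR ltnNge mj ltnNge (leq_trans mj jl) Urow_mul0 //; lia.
Qed.

Lemma lower_support i k : L i k != 0 -> (k < i)%N.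
Proof. by rewrite ltnNge; apply: contra => ik; rewrite L_lower. Qed.

Lemma upper_support i k : U i k != 0 -> (i < k)%N.
Proof. by rewrite ltnNge; apply: contra => ki; rewrite U_upper. Qed.

Lemma FTC_sum_lower : \sum_(l < d | (l < n - 1)%N) FTC L U l = L.
Proof.
apply: sum_pieces_mx => [l i k lm | i k /lower_support ki]; first by rewrite /FTC lm mxE.
have iN := ltn_ord i; have kd : (k < d)%N by lia.
exists (Ordinal kd) => [|l _ /andP[/eqP kl _]]; [rewrite /=; lia | apply: val_inj => /=; lia].
Qed.

Lemma FTC_sum_upper : \sum_(l < d | (n - 1 <= l)%N) FTC L U l = U.
Proof.
apply: sum_pieces_mx => [l i k ml | i k /upper_support ik].
  by rewrite /FTC ltnNge ml mxE.
have kN := ltn_ord k; have ld : (d - k < d)%N by lia.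
by exists (Ordinal ld) => [|l Pl /andP[/eqP kl _]]; [rewrite /=; lia | apply: val_inj => /=; lia].
Qed.

Lemma FTR_sum_lower : \sum_(l < d | (l < n - 1)%N) FTR L U l = L.
Proof.
apply: sum_pieces_mx => [l i k lm | i k /lower_support ki]; first by rewrite /FTR lm mxE.
have iN := ltn_ord i; have ld : (i.-1 < d)%N by lia.
by exists (Ordinal ld) => [|l Pl /andP[/eqP il _]]; [rewrite /=; lia | apply: val_inj => /=; lia].
Qed.

Lemma FTR_sum_upper : \sum_(l < d | (n - 1 <= l)%N) FTR L U l = U.
Proof.
apply: sum_pieces_mx => [l i k ml | i k /upper_support ik].
  by rewrite /FTR ltnNge ml mxE.
have kN := ltn_ord k; have ld : (2 * n - 3 - i < d)%N by lia.
by exists (Ordinal ld) => [|l Pl /andP[/eqP il _]]; [rewrite /=; lia | apply: val_inj => /=; have := ltn_ord l; lia].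
Qed.

End FrontTriangularSplittings.

Theorem theorem6p5 (R : realType) (n : nat) (L U : 'M[R]_n) :
  strictly_lower L -> strictly_upper U ->
  (forall j, (j < n - 1)%N -> Lcol L j != 0) ->
  (forall j, (1 <= j < n)%N -> Ucol U j != 0) ->
  (forall i, (1 <= i < n)%N -> Lrow L i != 0) ->
  (forall i, (i < n - 1)%N -> Urow U i != 0) ->
  forall z : R[i],
    (nz_eigenvalue (iter_mx (FTC L U)) z <-> nz_eigenvalue (sGS L U) z) /\
    (nz_eigenvalue (iter_mx (FTR L U)) z <-> nz_eigenvalue (sGS L U) z).
Proof.
(* The nonvanishing hypotheses only make FTC and FTR genuine splittings; the
   spectral identity does not depend on them. *)
move=> L_lower U_upper _ _ _ _ z; split; apply: splitting_nz_eigenvalue => //.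
- exact: FTC_mul_lower.
- exact: FTC_mul_upper.
- exact: FTC_sum_lower.
- exact: FTC_sum_upper.
- exact: FTR_mul_lower.
- exact: FTR_mul_upper.
- exact: FTR_sum_lower.
- exact: FTR_sum_upper.
Qed.
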